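(* Let $A$ be a generic real $6\times6$ skew-Hamiltonian matrix, let $p,q,r$ be smooth functions on $\mathbb R^6$, and define for $\varepsilon\in\mathbb R$ $$\Pi(x)=(1-\varepsilon^2p(x))J-\varepsilon^2q(x)A^{\rm T}J-\varepsilon^2r(x)(A^{\rm T})^2J.$$ Then $\Pi$ is a Poisson tensor for all $\varepsilon$ if and only if $\nabla q=C_1\nabla r$ and $\nabla p=C_2\nabla r$, where $C_1=A-aI$, $C_2=A^2-aA+bI$, $a=\tfrac12\operatorname{tr}A$, $b=\tfrac18(\operatorname{tr}A)^2-\tfrac14\operatorname{tr}(A^2)$.
   Context: $J=\begin{pmatrix}0&I_3\\-I_3&0\end{pmatrix}$; a real $6\times6$ matrix $A$ is skew-Hamiltonian if $A^{\rm T}J=JA$. Genericity: the characteristic polynomial of $A$ (a square of a cubic) has three pairwise distinct roots, each a double eigenvalue. A (skew-symmetric) matrix-valued function $\Pi$ is a Poisson tensor if the bracket $\{F,G\}=(\nabla F)^{\rm T}\Pi\nabla G$ satisfies the Jacobi identity, i.e. $\{x_i,\{x_j,x_k\}\}+\{x_j,\{x_k,x_i\}\}+\{x_k,\{x_i,x_j\}\}=0$ for all $i,j,k$. *)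

From Stdlib Require Import Reals Lra ClassicalEpsilon.
Open Scope R_scope.

(** Points of R^6 are read off the first six coordinates of x : nat -> R.
    Functions on R^6 are genuinely 6-argument real functions. *)
Definition R6fun := R -> R -> R -> R -> R -> R -> R.
Definition ev6 (f : R6fun) (x : nat -> R) : R := f (x 0%nat) (x 1%nat) (x 2%nat) (x 3%nat) (x 4%nat) (x 5%nat).
Definition upd (x : nat -> R) (i : nat) (t : R) : nat -> R :=
  fun m => if Nat.eqb m i then t else x m.

Definition cont6 (f : R6fun) : Prop :=
  forall (x : nat -> R) (e : R), 0 < e -> exists d, 0 < d /\
    forall y : nat -> R, (forall i, (i < 6)%nat -> Rabs (y i - x i) < d) ->
      Rabs (ev6 f y - ev6 f x) < e.

Fixpoint Ck (k : nat) (f : R6fun) : Prop :=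
  match k with
  | O => cont6 f
  | S k' => cont6 f /\ exists g : nat -> R6fun,
      (forall i x, (i < 6)%nat ->
         derivable_pt_lim (fun t => ev6 f (upd x i t)) (x i) (ev6 (g i) x)) /\
      (forall i, (i < 6)%nat -> Ck k' (g i))
  end.
Definition smooth (f : R6fun) : Prop := forall k, Ck k f.

Definition pd (f : R6fun) (i : nat) (x : nat -> R) : R :=
  epsilon (inhabits 0) (fun l => derivable_pt_lim (fun t => ev6 f (upd x i t)) (x i) l).

Definition sum6 (f : nat -> R) : R := sum_f_R0 f 5.
Definition Mat := nat -> nat -> R.
Definition mmul (A B : Mat) : Mat := fun i j => sum6 (fun k => A i k * B k j).
Definition trans (A : Mat) : Mat := fun i j => A j i.
Definition madd (A B : Mat) : Mat := fun i j => A i j + B i j.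
Definition mscale (c : R) (A : Mat) : Mat := fun i j => c * A i j.
Definition Id6 : Mat := fun i j => if Nat.eqb i j then 1 else 0.
Definition trace (A : Mat) : R := sum6 (fun i => A i i).

(** J = [[0, I_3], [-I_3, 0]] *)
Definition Jm : Mat := fun i j =>
  if (Nat.ltb i 3 && Nat.eqb j (i + 3))%bool then 1
  else if (Nat.leb 3 i && Nat.ltb i 6 && Nat.eqb (j + 3) i)%bool then -1
  else 0.

Definition skew_hamiltonian (A : Mat) : Prop :=
  forall i j, (i < 6)%nat -> (j < 6)%nat -> mmul (trans A) Jm i j = mmul Jm A i j.

(** Determinant of the leading n x n block, by Laplace expansion along row 0. *)
Definition minor0 (j : nat) (M : Mat) : Mat :=
  fun i k => M (S i) (if Nat.ltb k j then k else S k).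
Fixpoint detn (n : nat) (M : Mat) : R :=
  match n with
  | O => 1
  | S m => sum_f_R0 (fun j => (-1) ^ j * M 0%nat j * detn m (minor0 j M)) m
  end.
Definition charpoly6 (A : Mat) (lam : R) : R :=
  detn 6 (fun i j => lam * Id6 i j - A i j).

Definition C := (R * R)%type.
Definition Cadd (z w : C) : C := (fst z + fst w, snd z + snd w).
Definition Cmul (z w : C) : C :=
  (fst z * fst w - snd z * snd w, fst z * snd w + snd z * fst w).
Definition Creal (a : R) : C := (a, 0).
Definition cubic_evalC (c2 c1 c0 : R) (z : C) : C :=
  Cadd (Cmul z (Cmul z z))
   (Cadd (Cmul (Creal c2) (Cmul z z)) (Cadd (Cmul (Creal c1) z) (Creal c0))).

(** Genericity: the characteristic polynomial is the square of a (monic) cubic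
    having three pairwise distinct (complex) roots, each thus a double eigenvalue. *)
Definition generic_sh (A : Mat) : Prop :=
  exists c2 c1 c0 : R,
    (forall lam, charpoly6 A lam = (lam ^ 3 + c2 * lam ^ 2 + c1 * lam + c0) ^ 2) /\
    exists z1 z2 z3 : C, z1 <> z2 /\ z1 <> z3 /\ z2 <> z3 /\
      cubic_evalC c2 c1 c0 z1 = (0, 0) /\ cubic_evalC c2 c1 c0 z2 = (0, 0) /\
      cubic_evalC c2 c1 c0 z3 = (0, 0).

Definition poisson_tensor (Pi : nat -> nat -> R6fun) : Prop :=
  (forall i j x, (i < 6)%nat -> (j < 6)%nat -> ev6 (Pi i j) x = - ev6 (Pi j i) x) /\
  (forall i j k x, (i < 6)%nat -> (j < 6)%nat -> (k < 6)%nat ->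
     (* {x_i,{x_j,x_k}} = sum_l Pi_il d_l Pi_jk *)
     sum6 (fun l => ev6 (Pi i l) x * pd (Pi j k) l x)
   + sum6 (fun l => ev6 (Pi j l) x * pd (Pi k i) l x)
   + sum6 (fun l => ev6 (Pi k l) x * pd (Pi i j) l x) = 0).

Definition PiT (eps : R) (A : Mat) (p q r : R6fun) : nat -> nat -> R6fun :=
  fun j k => fun a0 a1 a2 a3 a4 a5 =>
    (1 - eps ^ 2 * p a0 a1 a2 a3 a4 a5) * Jm j k
    - eps ^ 2 * q a0 a1 a2 a3 a4 a5 * mmul (trans A) Jm j k
    - eps ^ 2 * r a0 a1 a2 a3 a4 a5 * mmul (mmul (trans A) (trans A)) Jm j k.

Definition a_coef (A : Mat) : R := trace A / 2.
Definition b_coef (A : Mat) : R := (trace A) ^ 2 / 8 - trace (mmul A A) / 4.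
Definition C1m (A : Mat) : Mat := madd A (mscale (- a_coef A) Id6).
Definition C2m (A : Mat) : Mat :=
  madd (mmul A A) (madd (mscale (- a_coef A) A) (mscale (b_coef A) Id6)).

Definition grad_rel (f : R6fun) (M : Mat) (g : R6fun) : Prop :=
  forall x i, (i < 6)%nat -> pd f i x = sum6 (fun j => M i j * pd g j x).

From Stdlib Require Import Reals Lra Lia Arith ClassicalEpsilon.
From Coquelicot Require Complex.
Open Scope R_scope.

(* Write Pi = J - eps^2 (p J + q A^T J + r (A^T)^2 J).  Its Jacobi sum is
   -eps^2 G0 + eps^4 G1, where G0 and G1 are bilinear in the gradients, so the
   identity holds for every eps iff G0 = G1 = 0.  Both expand into a trilinear
   cyclic form evaluated at the gradients transported by J, A^T J and (A^T)^2 J.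
   Since A^T J = J A, the relations grad p = C2 grad r, grad q = C1 grad r
   are preserved by this transport and the cyclic form vanishes on every such
   triple (a polynomial identity in the 15 parameters of A).  Conversely, if G0
   vanishes, contracting the cyclic form with J and with A J gives two linear
   equations for the defect of the relations; together with Cayley-Hamilton for
   the cubic whose square is the characteristic polynomial they force the
   defect to vanish, because that cubic has nonzero discriminant. *)

Ltac destruct6 i := destruct i as [|[|[|[|[|[|?]]]]]]; [ | | | | | | exfalso; lia].

Ltac unfold_sums := cbv beta iota zeta delta [sum6 sum_f_R0] in *.

Lemma sum6_ext (f g : nat -> R) :
  (forall l, (l < 6)%nat -> f l = g l) -> sum6 f = sum6 g.
Proof.
  intro H. unfold sum6, sum_f_R0.
  rewrite (H 0%nat), (H 1%nat), (H 2%nat), (H 3%nat), (H 4%nat), (H 5%nat) by lia.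
  reflexivity.
Qed.

Lemma sum6_eq0 (f : nat -> R) : (forall l, (l < 6)%nat -> f l = 0) -> sum6 f = 0.
Proof. intro H. rewrite (sum6_ext f (fun _ => 0) H). unfold_sums. ring. Qed.

Definition agree6 (M M' : Mat) : Prop :=
  forall i j, (i < 6)%nat -> (j < 6)%nat -> M i j = M' i j.

Lemma agree6_refl M : agree6 M M.
Proof. now intros i j _ _. Qed.

Lemma trans_agree6 M M' : agree6 M M' -> agree6 (trans M) (trans M').
Proof. intros H i j Hi Hj. exact (H j i Hj Hi). Qed.

Lemma mmul_agree6 M M' P P' :
  agree6 M M' -> agree6 P P' -> agree6 (mmul M P) (mmul M' P').
Proof.
  intros HM HP i j Hi Hj. apply sum6_ext. intros l Hl. now rewrite HM, HP.
Qed.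

Lemma madd_agree6 M M' P P' :
  agree6 M M' -> agree6 P P' -> agree6 (madd M P) (madd M' P').
Proof. intros HM HP i j Hi Hj. unfold madd. now rewrite HM, HP. Qed.

Lemma mscale_agree6 c M M' : agree6 M M' -> agree6 (mscale c M) (mscale c M').
Proof. intros HM i j Hi Hj. unfold mscale. now rewrite HM. Qed.

Lemma trace_agree6 M M' : agree6 M M' -> trace M = trace M'.
Proof. intro H. apply sum6_ext. intros l Hl. now apply H. Qed.

Lemma C1m_agree6 M M' : agree6 M M' -> agree6 (C1m M) (C1m M').
Proof.
  intro H. unfold C1m, a_coef. rewrite (trace_agree6 M M' H).
  apply madd_agree6; [exact H | apply agree6_refl].
Qed.

Lemma C2m_agree6 M M' : agree6 M M' -> agree6 (C2m M) (C2m M').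
Proof.
  intro H. unfold C2m, a_coef, b_coef.
  rewrite (trace_agree6 M M' H), (trace_agree6 _ _ (mmul_agree6 M M' M M' H H)).
  apply madd_agree6; [now apply mmul_agree6 |].
  apply madd_agree6; [now apply mscale_agree6 | apply agree6_refl].
Qed.

Lemma detn_agree (n : nat) (M M' : Mat) :
  (forall i j, (i < n)%nat -> (j < n)%nat -> M i j = M' i j) -> detn n M = detn n M'.
Proof.
  revert M M'. induction n as [|n IH]; intros M M' H; [reflexivity |].
  cbn [detn]. apply sum_eq. intros j Hj.
  rewrite (H 0%nat j) by lia. f_equal. apply IH. intros i k Hi Hk.
  unfold minor0. destruct (Nat.ltb k j); apply H; lia.
Qed.

Lemma charpoly6_agree6 M M' lam : agree6 M M' -> charpoly6 M lam = charpoly6 M' lam.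
Proof. intro H. apply detn_agree. intros i j Hi Hj. now rewrite H. Qed.

Definition mvec (M : Mat) (w : nat -> R) (i : nat) : R := sum6 (fun j => M i j * w j).
Definition AtJ (A : Mat) : Mat := mmul (trans A) Jm.
Definition At2J (A : Mat) : Mat := mmul (mmul (trans A) (trans A)) Jm.

Lemma mvec_ext M w w' i :
  (forall l, (l < 6)%nat -> w l = w' l) -> mvec M w i = mvec M w' i.
Proof. intro H. apply sum6_ext. intros l Hl. now rewrite H. Qed.

Lemma mvec_eq0 M w i : (forall l, (l < 6)%nat -> w l = 0) -> mvec M w i = 0.
Proof. intro H. apply sum6_eq0. intros l Hl. rewrite H by exact Hl. ring. Qed.

Lemma mvec_minus M w w' i : mvec M (fun l => w l - w' l) i = mvec M w i - mvec M w' i.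
Proof. unfold mvec. unfold_sums. ring. Qed.

Lemma mvec_lincomb M x y z p q r i :
  mvec M (fun l => x * p l + y * q l - z * r l) i
  = x * mvec M p i + y * mvec M q i - z * mvec M r i.
Proof. unfold mvec. unfold_sums. ring. Qed.

Lemma mmul_assoc M P Q i j : mmul (mmul M P) Q i j = mmul M (mmul P Q) i j.
Proof. unfold mmul. unfold_sums. ring. Qed.

Lemma trans_mmul M P i j : trans (mmul M P) i j = mmul (trans P) (trans M) i j.
Proof. unfold trans, mmul. unfold_sums. ring. Qed.

Lemma mvec_mmul M P w i : mvec (mmul M P) w i = mvec M (mvec P w) i.
Proof. unfold mvec, mmul. unfold_sums. ring. Qed.

Lemma mvec_AtJ M w i : mvec (AtJ M) w i = mvec (trans M) (mvec Jm w) i.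
Proof. apply mvec_mmul. Qed.

Lemma mvec_At2J M w i :
  mvec (At2J M) w i = mvec (trans M) (mvec (trans M) (mvec Jm w)) i.
Proof. unfold At2J. now rewrite !mvec_mmul. Qed.

(** * Skew-Hamiltonian matrices *)

Section SkewHamiltonianAlgebra.
Variables M P : Mat.
Hypotheses (HM : skew_hamiltonian M) (HP : skew_hamiltonian P).

Lemma skew_hamiltonian_mmul_self : skew_hamiltonian (mmul M M).
Proof.
  intros i j Hi Hj.
  assert (HT : agree6 (trans (mmul M M)) (mmul (trans M) (trans M)))
    by (intros k l _ _; apply trans_mmul).
  rewrite (mmul_agree6 _ _ _ _ HT (agree6_refl Jm) i j Hi Hj), mmul_assoc.
  rewrite (mmul_agree6 _ _ _ _ (agree6_refl _) HM i j Hi Hj), <- mmul_assoc.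
  rewrite (mmul_agree6 _ _ _ _ HM (agree6_refl M) i j Hi Hj), mmul_assoc.
  reflexivity.
Qed.

Lemma skew_hamiltonian_madd : skew_hamiltonian (madd M P).
Proof.
  intros i j Hi Hj.
  transitivity (mmul (trans M) Jm i j + mmul (trans P) Jm i j);
    [| rewrite HM, HP by assumption]; unfold mmul, madd, trans; unfold_sums; ring.
Qed.

Lemma skew_hamiltonian_mscale c : skew_hamiltonian (mscale c M).
Proof.
  intros i j Hi Hj.
  transitivity (c * mmul (trans M) Jm i j);
    [| rewrite HM by assumption]; unfold mmul, mscale, trans; unfold_sums; ring.
Qed.

End SkewHamiltonianAlgebra.

Definition skew_of_upper (f : nat -> nat -> R) (i j : nat) : R :=
  if Nat.ltb i j then f i j else if Nat.ltb j i then - f j i else 0.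

(* [[B, S], [T, B^T]] with [S], [T] skew-symmetric; all entries are read off [A]. *)
Definition sh_normal (A : Mat) : Mat := fun i j =>
  match Nat.ltb i 3, Nat.ltb j 3 with
  | true, true => A i j
  | true, false => skew_of_upper (fun k l => A k (l + 3)%nat) i (j - 3)%nat
  | false, true => skew_of_upper (fun k l => A (k + 3)%nat l) (i - 3)%nat j
  | false, false => A (j - 3)%nat (i - 3)%nat
  end.

Ltac unfold_mx := cbv beta iota zeta delta [sum6 sum_f_R0 mmul trans madd mscale Id6 Jm
  C1m C2m Nat.ltb Nat.leb Nat.eqb Nat.sub andb Nat.add mvec AtJ At2J
  sh_normal skew_of_upper] in *.

Lemma skew_hamiltonian_Id6 : skew_hamiltonian Id6.
Proof. intros i j Hi Hj. destruct6 i; destruct6 j; unfold_mx; ring. Qed.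

Lemma skew_hamiltonian_C1m M : skew_hamiltonian M -> skew_hamiltonian (C1m M).
Proof.
  intro HM. apply skew_hamiltonian_madd; [exact HM |].
  apply skew_hamiltonian_mscale, skew_hamiltonian_Id6.
Qed.

Lemma skew_hamiltonian_C2m M : skew_hamiltonian M -> skew_hamiltonian (C2m M).
Proof.
  intro HM. apply skew_hamiltonian_madd; [now apply skew_hamiltonian_mmul_self |].
  apply skew_hamiltonian_madd; apply skew_hamiltonian_mscale;
    [exact HM | apply skew_hamiltonian_Id6].
Qed.

Lemma skew_hamiltonian_mvec_Jm M w i : skew_hamiltonian M -> (i < 6)%nat ->
  mvec Jm (mvec M w) i = mvec (trans M) (mvec Jm w) i.
Proof.
  intros HM Hi. rewrite <- !mvec_mmul. apply sum6_ext. intros l Hl. now rewrite HM.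
Qed.

Lemma skew_hamiltonian_sh_normal A : skew_hamiltonian A -> agree6 A (sh_normal A).
Proof.
  intros HA i j Hi Hj.
  (* entry (i + 3 mod 6, j) of A^T J = J A expresses A i j by the normal form *)
  assert (Hi' : ((if Nat.ltb i 3 then i + 3 else i - 3) < 6)%nat)
    by (destruct (Nat.ltb_spec i 3); lia).
  pose proof (HA _ j Hi' Hj) as E.
  destruct6 i; destruct6 j; unfold_mx; lra.
Qed.

Lemma sh_normal_skew_hamiltonian A : skew_hamiltonian (sh_normal A).
Proof. intros i j Hi Hj. destruct6 i; destruct6 j; unfold_mx; ring. Qed.

Lemma a_coef_sh_normal A :
  a_coef (sh_normal A) = A 0%nat 0%nat + A 1%nat 1%nat + A 2%nat 2%nat.
Proof. unfold a_coef, trace. unfold_mx. field. Qed.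

Lemma b_coef_sh_normal A : b_coef (sh_normal A) =
  A 0%nat 0%nat * A 1%nat 1%nat - A 0%nat 1%nat * A 1%nat 0%nat
  + A 0%nat 0%nat * A 2%nat 2%nat - A 0%nat 2%nat * A 2%nat 0%nat
  + A 1%nat 1%nat * A 2%nat 2%nat - A 1%nat 2%nat * A 2%nat 1%nat
  + A 0%nat 4%nat * A 3%nat 1%nat + A 0%nat 5%nat * A 3%nat 2%nat
  + A 1%nat 5%nat * A 4%nat 2%nat.
Proof. unfold b_coef, trace. unfold_mx. field. Qed.

Lemma Jm_antisym j k : (j < 6)%nat -> (k < 6)%nat -> Jm j k = - Jm k j.
Proof. intros Hj Hk. destruct6 j; destruct6 k; unfold_mx; ring. Qed.

Lemma mvec_Jm_injective w : (forall m, (m < 6)%nat -> mvec Jm w m = 0) ->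
  forall m, (m < 6)%nat -> w m = 0.
Proof.
  intros H m Hm.
  assert (E : w m = - mvec Jm (mvec Jm w) m) by (destruct6 m; unfold_mx; ring).
  rewrite E, (mvec_eq0 Jm _ m H). ring.
Qed.

Lemma AtJ_antisym M j k : skew_hamiltonian M -> (j < 6)%nat -> (k < 6)%nat ->
  AtJ M j k = - AtJ M k j.
Proof.
  intros HM Hj Hk. unfold AtJ. rewrite HM by assumption.
  transitivity (- sum6 (fun l => M l k * Jm l j)); [| reflexivity].
  unfold mmul. rewrite (sum6_ext _ (fun l => - (M l k * Jm l j)));
    [unfold_sums; ring |].
  intros l Hl. rewrite (Jm_antisym j l) by assumption. unfold trans. ring.
Qed.

Lemma At2J_antisym M j k : skew_hamiltonian M -> (j < 6)%nat -> (k < 6)%nat ->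
  At2J M j k = - At2J M k j.
Proof.
  intros HM Hj Hk.
  assert (E : forall a b, (a < 6)%nat -> (b < 6)%nat -> At2J M a b = AtJ (mmul M M) a b).
  { intros a b Ha Hb. apply sum6_ext. intros l Hl. unfold AtJ. now rewrite trans_mmul. }
  rewrite !E by assumption.
  now apply AtJ_antisym; [apply skew_hamiltonian_mmul_self |..].
Qed.

(** * The half characteristic polynomial *)

Definition pfaffian6 (B : Mat) : R :=
  B 0%nat 1%nat * (B 2%nat 3%nat * B 4%nat 5%nat - B 2%nat 4%nat * B 3%nat 5%nat
                   + B 2%nat 5%nat * B 3%nat 4%nat)
  - B 0%nat 2%nat * (B 1%nat 3%nat * B 4%nat 5%nat - B 1%nat 4%nat * B 3%nat 5%nat
                     + B 1%nat 5%nat * B 3%nat 4%nat)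
  + B 0%nat 3%nat * (B 1%nat 2%nat * B 4%nat 5%nat - B 1%nat 4%nat * B 2%nat 5%nat
                     + B 1%nat 5%nat * B 2%nat 4%nat)
  - B 0%nat 4%nat * (B 1%nat 2%nat * B 3%nat 5%nat - B 1%nat 3%nat * B 2%nat 5%nat
                     + B 1%nat 5%nat * B 2%nat 3%nat)
  + B 0%nat 5%nat * (B 1%nat 2%nat * B 3%nat 4%nat - B 1%nat 3%nat * B 2%nat 4%nat
                     + B 1%nat 4%nat * B 2%nat 3%nat).

Definition half_charpoly (A : Mat) (lam : R) : R :=
  - pfaffian6 (mmul Jm (madd (mscale lam Id6) (mscale (-1) A))).

Ltac unfold_charpoly := cbv beta iota zeta delta [half_charpoly pfaffian6 charpoly6
  detn minor0 pow] in *.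

Lemma charpoly6_sh_normal A lam :
  charpoly6 (sh_normal A) lam = half_charpoly (sh_normal A) lam ^ 2.
Proof. unfold_charpoly. unfold_mx. ring. Qed.

Lemma half_charpoly_sh_normal A lam :
  let N := sh_normal A in
  half_charpoly N lam = lam ^ 3 - a_coef N * lam ^ 2 + b_coef N * lam + half_charpoly N 0.
Proof.
  intro N. unfold N. rewrite a_coef_sh_normal, b_coef_sh_normal.
  unfold_charpoly. unfold_mx. ring.
Qed.

Lemma cayley_hamilton_sh_normal A w m : (m < 6)%nat ->
  let N := sh_normal A in
  let T := mvec (trans N) in
  T (T (T w)) m - a_coef N * T (T w) m + b_coef N * T w m + half_charpoly N 0 * w m = 0.
Proof.
  intros Hm N T. unfold T, N. rewrite a_coef_sh_normal, b_coef_sh_normal.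
  destruct6 m; unfold_charpoly; unfold_mx; ring.
Qed.

Definition cubic_discriminant (c2 c1 c0 : R) : R :=
  c2^2 * c1^2 - 4 * c1^3 - 4 * c2^3 * c0 - 27 * c0^2 + 18 * c2 * c1 * c0.

Module CubicRoots.
Import Coquelicot.Complex.
Local Open Scope C_scope.

Lemma Cmult_cancel_l (V w : C) : V <> 0 -> V * w = 0 -> w = 0.
Proof.
  intros HV E. replace w with (V * w / V) by (field; exact HV). rewrite E. field; exact HV.
Qed.

Lemma Cminus_neq0 (z w : C) : z <> w -> z - w <> 0.
Proof. intros H E. apply H. replace z with (z - w + w) by ring. rewrite E. ring. Qed.

(* Vieta's formulas, then the discriminant is the square of the Vandermonde product. *)
Lemma cubic_discriminant_neq0 c2 c1 c0 (z1 z2 z3 : C) :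
  z1 <> z2 -> z1 <> z3 -> z2 <> z3 ->
  cubic_evalC c2 c1 c0 z1 = (0, 0) -> cubic_evalC c2 c1 c0 z2 = (0, 0) ->
  cubic_evalC c2 c1 c0 z3 = (0, 0) ->
  cubic_discriminant c2 c1 c0 <> 0%R.
Proof.
  intros n12 n13 n23 f1 f2 f3 Hd.
  set (p z := z * (z * z) + (RtoC c2 * (z * z) + (RtoC c1 * z + RtoC c0))).
  change (p z1 = 0) in f1. change (p z2 = 0) in f2. change (p z3 = 0) in f3.
  assert (HV : (z1 - z2) * (z1 - z3) * (z2 - z3) <> 0)
    by (repeat apply Cmult_neq_0; now apply Cminus_neq0).
  assert (s2 : RtoC c2 + (z1 + z2 + z3) = 0).
  { apply (Cmult_cancel_l _ _ HV).
    transitivity (p z1 * (z2 - z3) - p z2 * (z1 - z3) + p z3 * (z1 - z2));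
      [unfold p; ring | rewrite f1, f2, f3; ring]. }
  assert (s1 : RtoC c1 - (z1 * z2 + z1 * z3 + z2 * z3) = 0).
  { apply (Cmult_cancel_l (z1 - z2)); [now apply Cminus_neq0 |].
    transitivity (p z1 - p z2 - (RtoC c2 + (z1 + z2 + z3)) * (z1 * z1 - z2 * z2));
      [unfold p; ring | rewrite f1, f2, s2; ring]. }
  assert (s0 : RtoC c0 + z1 * z2 * z3 = 0).
  { transitivity (p z1 - (RtoC c2 + (z1 + z2 + z3)) * (z1 * z1)
                  - (RtoC c1 - (z1 * z2 + z1 * z3 + z2 * z3)) * z1);
      [unfold p; ring | rewrite f1, s2, s1; ring]. }
  apply (Cmult_neq_0 _ _ HV HV).
  transitivity (RtoC (cubic_discriminant c2 c1 c0)); [| rewrite Hd; reflexivity].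
  replace (RtoC (cubic_discriminant c2 c1 c0)) with
    (RtoC c2 ^ 2 * RtoC c1 ^ 2 - 4 * RtoC c1 ^ 3 - 4 * RtoC c2 ^ 3 * RtoC c0
     - 27 * RtoC c0 ^ 2 + 18 * RtoC c2 * RtoC c1 * RtoC c0)
    by (unfold cubic_discriminant; apply injective_projections; simpl; ring).
  replace (RtoC c2) with (RtoC c2 + (z1 + z2 + z3) - (z1 + z2 + z3)) by ring.
  replace (RtoC c1) with (RtoC c1 - (z1 * z2 + z1 * z3 + z2 * z3)
                          + (z1 * z2 + z1 * z3 + z2 * z3)) by ring.
  replace (RtoC c0) with (RtoC c0 + z1 * z2 * z3 - z1 * z2 * z3) by ring.
  rewrite s2, s1, s0. ring.
Qed.
End CubicRoots.

Lemma square_monic_cubic_inj x2 x1 x0 y2 y1 y0 :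
  (forall l, (l^3 + x2 * l^2 + x1 * l + x0)^2 = (l^3 + y2 * l^2 + y1 * l + y0)^2) ->
  x2 = y2 /\ x1 = y1 /\ x0 = y0.
Proof.
  intro H.
  (* the difference is a quintic vanishing at 0, ..., 5, hence zero; its top three
     coefficients then give x2 = y2, x1 = y1, x0 = y0 in turn *)
  set (d5 := 2 * (x2 - y2)). set (d4 := x2^2 + 2 * x1 - y2^2 - 2 * y1).
  set (d3 := 2 * x0 + 2 * x2 * x1 - 2 * y0 - 2 * y2 * y1).
  set (d2 := x1^2 + 2 * x2 * x0 - y1^2 - 2 * y2 * y0).
  set (d1 := 2 * x1 * x0 - 2 * y1 * y0). set (d0 := x0^2 - y0^2).
  assert (K : forall l, d5 * l^5 + d4 * l^4 + d3 * l^3 + d2 * l^2 + d1 * l + d0 = 0).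
  { intro l. transitivity ((l^3 + x2 * l^2 + x1 * l + x0)^2 - (l^3 + y2 * l^2 + y1 * l + y0)^2);
      [unfold d5, d4, d3, d2, d1, d0; ring | rewrite H; ring]. }
  pose proof (K 0) as k0. pose proof (K 1) as k1. pose proof (K 2) as k2.
  pose proof (K 3) as k3. pose proof (K 4) as k4. pose proof (K 5) as k5.
  simpl in k0, k1, k2, k3, k4, k5.
  assert (z5 : d5 = 0) by lra. assert (z4 : d4 = 0) by lra. assert (z3 : d3 = 0) by lra.
  unfold d5, d4, d3 in *.
  assert (e2 : x2 = y2) by lra. subst y2.
  assert (e1 : x1 = y1) by lra. subst y1.
  repeat split. lra.
Qed.

Lemma generic_sh_discriminant A :
  let N := sh_normal A in
  generic_sh N -> cubic_discriminant (- a_coef N) (b_coef N) (half_charpoly N 0) <> 0.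
Proof.
  intros N (c2 & c1 & c0 & Hc & z1 & z2 & z3 & n12 & n13 & n23 & f1 & f2 & f3).
  assert (Hsq : forall l, (l^3 + - a_coef N * l^2 + b_coef N * l + half_charpoly N 0)^2
                          = (l^3 + c2 * l^2 + c1 * l + c0)^2).
  { intro l. rewrite <- Hc. unfold N.
    rewrite charpoly6_sh_normal, (half_charpoly_sh_normal A l). f_equal. ring. }
  destruct (square_monic_cubic_inj _ _ _ _ _ _ Hsq) as (-> & -> & ->).
  exact (CubicRoots.cubic_discriminant_neq0 c2 c1 c0 z1 z2 z3 n12 n13 n23 f1 f2 f3).
Qed.

Lemma cubic_elimination a b c v0 v1 v2 v3 v4 :
  (a^2 - 4 * b) * v0 + 2 * a * v1 - 3 * v2 = 0 ->
  (a^2 - 4 * b) * v1 + 2 * a * v2 - 3 * v3 = 0 ->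
  (a^2 - 4 * b) * v2 + 2 * a * v3 - 3 * v4 = 0 ->
  v3 - a * v2 + b * v1 + c * v0 = 0 ->
  v4 - a * v3 + b * v2 + c * v1 = 0 ->
  cubic_discriminant (-a) b c * v0 = 0.
Proof.
  intros e0 e1 e2 k0 k1.
  transitivity ((b^2 + 3 * a * c) * ((a^2 - 4 * b) * v0 + 2 * a * v1 - 3 * v2)
    + (-9 * c - a * b) * ((a^2 - 4 * b) * v1 + 2 * a * v2 - 3 * v3)
    + (a^2 - 3 * b) * ((a^2 - 4 * b) * v2 + 2 * a * v3 - 3 * v4)
    + (a^3 - 6 * a * b - 27 * c) * (v3 - a * v2 + b * v1 + c * v0)
    + (3 * a^2 - 9 * b) * (v4 - a * v3 + b * v2 + c * v1)).
  - unfold cubic_discriminant. ring.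
  - rewrite e0, e1, e2, k0, k1. ring.
Qed.

Section CubicOperator.
Variables (M : Mat) (a b c : R).
Let T := mvec M.
Hypothesis cayley_hamilton : forall w m, (m < 6)%nat ->
  T (T (T w)) m - a * T (T w) m + b * T w m + c * w m = 0.
Hypothesis discriminant_neq0 : cubic_discriminant (-a) b c <> 0.

(* [3 t^2 - 2a t - (a^2 - 4b)] and [t^3 - a t^2 + b t + c] are coprime:
   their resultant is a nonzero multiple of the discriminant. *)
Lemma cubic_operator_kernel (v : nat -> R) :
  (forall m, (m < 6)%nat -> (a^2 - 4 * b) * v m + 2 * a * T v m - 3 * T (T v) m = 0) ->
  forall m, (m < 6)%nat -> v m = 0.
Proof.
  intros Hd m Hm.
  set (d := fun w l => (a^2 - 4 * b) * w l + 2 * a * T w l - 3 * T (T w) l).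
  assert (HTd : forall w l, T (d w) l = d (T w) l) by (intros; apply mvec_lincomb).
  assert (Hd1 : forall l, (l < 6)%nat -> d (T v) l = 0)
    by (intros l Hl; rewrite <- HTd; now apply mvec_eq0).
  assert (Hd2 : d (T (T v)) m = 0).
  { rewrite <- HTd. apply mvec_eq0. intros l Hl. rewrite <- HTd. now apply mvec_eq0. }
  pose proof (cubic_elimination a b c (v m) (T v m) (T (T v) m) (T (T (T v)) m)
    (T (T (T (T v))) m) (Hd m Hm) (Hd1 m Hm) Hd2 (cayley_hamilton v m Hm)
    (cayley_hamilton (T v) m Hm)) as E.
  apply Rmult_integral in E as [E | E]; [contradiction | exact E].
Qed.

Lemma cubic_operator_system_trivial (u v : nat -> R) :
  (forall m, (m < 6)%nat -> 2 * u m + a * v m - T v m = 0) ->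
  (forall m, (m < 6)%nat -> a * u m - T u m + (a^2 - 2 * b) * v m - T (T v) m = 0) ->
  forall m, (m < 6)%nat -> u m = 0 /\ v m = 0.
Proof.
  intros E1 E2.
  assert (Hv : forall m, (m < 6)%nat -> v m = 0).
  { apply cubic_operator_kernel. intros m Hm.
    assert (HTe1 : 2 * T u m + a * T v m - 1 * T (T v) m = 0).
    { unfold T. rewrite <- mvec_lincomb. apply mvec_eq0. intros l Hl.
      pose proof (E1 l Hl) as e. unfold T in e. lra. }
    transitivity (2 * (a * u m - T u m + (a^2 - 2 * b) * v m - T (T v) m)
                  - a * (2 * u m + a * v m - T v m)
                  + (2 * T u m + a * T v m - 1 * T (T v) m)); [ring |].
    rewrite E2, E1, HTe1 by exact Hm. ring. }
  intros m Hm. split; [| now apply Hv].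
  assert (HTv : T v m = 0) by now apply mvec_eq0.
  pose proof (E1 m Hm) as E. rewrite (Hv m Hm), HTv in E. lra.
Qed.

End CubicOperator.

(** * The cyclic form of a gradient triple *)

Definition pencil (A : Mat) (c0 c1 c2 : R) : Mat :=
  fun j k => c0 * Jm j k + c1 * AtJ A j k + c2 * At2J A j k.

Lemma pencil_antisym M c0 c1 c2 j k : skew_hamiltonian M -> (j < 6)%nat -> (k < 6)%nat ->
  pencil M c0 c1 c2 j k = - pencil M c0 c1 c2 k j.
Proof.
  intros HM Hj Hk. unfold pencil.
  rewrite Jm_antisym, AtJ_antisym, At2J_antisym by assumption. ring.
Qed.

Definition cyclic_form (A : Mat) (hp hq hr : nat -> R) (i j k : nat) : R :=
  pencil A (hp i) (hq i) (hr i) j k + pencil A (hp j) (hq j) (hr j) k i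
  + pencil A (hp k) (hq k) (hr k) i j.

Lemma alternating_zero_of_increasing (n : nat) (T : nat -> nat -> nat -> R) :
  (forall i j k, T j k i = T i j k) ->
  (forall i j k, (i < n)%nat -> (j < n)%nat -> (k < n)%nat -> T i k j = - T i j k) ->
  (forall i j k, (i < j)%nat -> (j < k)%nat -> (k < n)%nat -> T i j k = 0) ->
  forall i j k, (i < n)%nat -> (j < n)%nat -> (k < n)%nat -> T i j k = 0.
Proof.
  intros Hcyc Hanti Hinc i j k Hi Hj Hk.
  pose proof (Hcyc i j k). pose proof (Hcyc j k i).
  pose proof (Hanti i j k Hi Hj Hk). pose proof (Hanti j k i Hj Hk Hi).
  pose proof (Hanti k i j Hk Hi Hj).
  destruct (lt_eq_lt_dec i j) as [[Hij|Hij]|Hij];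
  destruct (lt_eq_lt_dec j k) as [[Hjk|Hjk]|Hjk];
  destruct (lt_eq_lt_dec i k) as [[Hik|Hik]|Hik];
  try (subst; lra); try lia.
  - pose proof (Hinc i j k Hij Hjk Hk). lra.
  - pose proof (Hinc i k j Hik Hjk Hj). lra.
  - pose proof (Hinc k i j Hik Hij Hj). lra.
  - pose proof (Hinc j i k Hij Hik Hk). lra.
  - pose proof (Hinc j k i Hjk Hik Hi). lra.
  - pose proof (Hinc k j i Hjk Hij Hi). lra.
Qed.

Definition compatible_triple (M : Mat) (hp hq hr : nat -> R) : Prop :=
  forall m, (m < 6)%nat ->
    hp m = mvec (trans (C2m M)) hr m /\ hq m = mvec (trans (C1m M)) hr m.

Lemma cyclic_form_increasing_sh_normal A z i j k :
  (i < j)%nat -> (j < k)%nat -> (k < 6)%nat ->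
  let N := sh_normal A in
  cyclic_form N (mvec (trans (C2m N)) z) (mvec (trans (C1m N)) z) z i j k = 0.
Proof.
  intros Hij Hjk Hk N. unfold N, C2m, C1m. rewrite a_coef_sh_normal, b_coef_sh_normal.
  destruct6 k; destruct6 j; destruct6 i; try (exfalso; lia);
    unfold cyclic_form, pencil; unfold_mx; ring.
Qed.

Lemma cyclic_form_compatible A hp hq hr i j k :
  let N := sh_normal A in
  compatible_triple N hp hq hr -> (i < 6)%nat -> (j < 6)%nat -> (k < 6)%nat ->
  cyclic_form N hp hq hr i j k = 0.
Proof.
  intros N Hh. revert i j k.
  apply alternating_zero_of_increasing.
  - intros i j k. unfold cyclic_form. ring.
  - intros i j k Hi Hj Hk. unfold cyclic_form.
    rewrite (pencil_antisym N _ _ _ k j), (pencil_antisym N _ _ _ j i),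
      (pencil_antisym N _ _ _ i k) by (apply sh_normal_skew_hamiltonian || assumption).
    ring.
  - intros i j k Hij Hjk Hk.
    rewrite <- (cyclic_form_increasing_sh_normal A hr i j k Hij Hjk Hk).
    unfold cyclic_form.
    destruct (Hh i) as [-> ->]; [lia |]. destruct (Hh j) as [-> ->]; [lia |].
    destruct (Hh k) as [-> ->]; [lia |]. reflexivity.
Qed.

Lemma compatible_triple_ext M hp hq hr hp' hq' hr' :
  (forall m, (m < 6)%nat -> hp m = hp' m) ->
  (forall m, (m < 6)%nat -> hq m = hq' m) ->
  (forall m, (m < 6)%nat -> hr m = hr' m) ->
  compatible_triple M hp hq hr -> compatible_triple M hp' hq' hr'.
Proof.
  intros Ep Eq Er H m Hm. rewrite <- Ep, <- Eq by exact Hm.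
  rewrite <- !(mvec_ext _ _ _ _ Er). now apply H.
Qed.

Lemma compatible_triple_trans M hp hq hr :
  compatible_triple M hp hq hr ->
  compatible_triple M (mvec (trans M) hp) (mvec (trans M) hq) (mvec (trans M) hr).
Proof.
  intros Hh m Hm.
  assert (Hp : mvec (trans M) hp m = mvec (trans M) (mvec (trans (C2m M)) hr) m)
    by (apply mvec_ext; intros l Hl; apply Hh, Hl).
  assert (Hq : mvec (trans M) hq m = mvec (trans M) (mvec (trans (C1m M)) hr) m)
    by (apply mvec_ext; intros l Hl; apply Hh, Hl).
  rewrite Hp, Hq. generalize (a_coef M) (b_coef M). intros a b.
  destruct6 m; split; unfold C1m, C2m, mvec; unfold_mx; ring.
Qed.

Lemma compatible_triple_Jm M gp gq gr : skew_hamiltonian M ->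
  (forall m, (m < 6)%nat -> gp m = mvec (C2m M) gr m) ->
  (forall m, (m < 6)%nat -> gq m = mvec (C1m M) gr m) ->
  compatible_triple M (mvec Jm gp) (mvec Jm gq) (mvec Jm gr).
Proof.
  intros HM Hp Hq m Hm. split.
  - rewrite (mvec_ext _ _ _ _ Hp).
    apply skew_hamiltonian_mvec_Jm; [apply skew_hamiltonian_C2m, HM | exact Hm].
  - rewrite (mvec_ext _ _ _ _ Hq).
    apply skew_hamiltonian_mvec_Jm; [apply skew_hamiltonian_C1m, HM | exact Hm].
Qed.

Lemma cyclic_form_contract_Jm A u v m : (m < 6)%nat ->
  let N := sh_normal A in
  sum6 (fun j => sum6 (fun k => cyclic_form N u v (fun _ => 0) m j k * Jm j k))
  = 2 * (2 * u m + a_coef N * v m - mvec (trans N) v m).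
Proof.
  intros Hm N. unfold N. rewrite a_coef_sh_normal. unfold cyclic_form, pencil.
  (* the At2J terms carry the factor 0; keeping them opaque keeps [ring] fast *)
  generalize (At2J (sh_normal A)). intro W.
  destruct6 m; unfold_mx; ring.
Qed.

Lemma cyclic_form_contract_NJ A u v m : (m < 6)%nat ->
  let N := sh_normal A in
  sum6 (fun j => sum6 (fun k => cyclic_form N u v (fun _ => 0) m j k * mmul N Jm j k))
  = 2 * (a_coef N * u m - mvec (trans N) u m + (a_coef N ^ 2 - 2 * b_coef N) * v m
         - mvec (trans N) (mvec (trans N) v) m).
Proof.
  intros Hm N. unfold N. rewrite a_coef_sh_normal, b_coef_sh_normal.
  unfold cyclic_form, pencil. generalize (At2J (sh_normal A)). intro W.
  destruct6 m; unfold_mx; ring.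
Qed.

Lemma cyclic_form_sh_normal_injective A u v :
  let N := sh_normal A in
  cubic_discriminant (- a_coef N) (b_coef N) (half_charpoly N 0) <> 0 ->
  (forall i j k, (i < 6)%nat -> (j < 6)%nat -> (k < 6)%nat ->
     cyclic_form N u v (fun _ => 0) i j k = 0) ->
  forall m, (m < 6)%nat -> u m = 0 /\ v m = 0.
Proof.
  intros N Hdisc Hzero. unfold N in *.
  assert (Hcontract : forall W m, (m < 6)%nat ->
            sum6 (fun j => sum6 (fun k =>
              cyclic_form (sh_normal A) u v (fun _ => 0) m j k * W j k)) = 0).
  { intros W m Hm. apply sum6_eq0. intros j Hj. apply sum6_eq0. intros k Hk.
    rewrite Hzero by assumption. ring. }
  apply (cubic_operator_system_trivial (trans (sh_normal A)) (a_coef (sh_normal A))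
           (b_coef (sh_normal A)) (half_charpoly (sh_normal A) 0)).
  - intros w m Hm. now apply cayley_hamilton_sh_normal.
  - exact Hdisc.
  - intros m Hm. pose proof (cyclic_form_contract_Jm A u v m Hm) as E.
    cbv zeta in E. rewrite Hcontract in E by exact Hm. lra.
  - intros m Hm. pose proof (cyclic_form_contract_NJ A u v m Hm) as E.
    cbv zeta in E. rewrite Hcontract in E by exact Hm. lra.
Qed.

Lemma grad_relations_of_cyclic_form A gp gq gr :
  let N := sh_normal A in
  cubic_discriminant (- a_coef N) (b_coef N) (half_charpoly N 0) <> 0 ->
  (forall i j k, (i < 6)%nat -> (j < 6)%nat -> (k < 6)%nat ->
     cyclic_form N (mvec Jm gp) (mvec Jm gq) (mvec Jm gr) i j k = 0) ->
  forall m, (m < 6)%nat -> gq m = mvec (C1m N) gr m /\ gp m = mvec (C2m N) gr m.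
Proof.
  intros N Hdisc Hzero. subst N.
  set (z := mvec Jm gr).
  set (u := fun l => mvec Jm gp l - mvec (trans (C2m (sh_normal A))) z l).
  set (v := fun l => mvec Jm gq l - mvec (trans (C1m (sh_normal A))) z l).
  assert (Huv : forall m, (m < 6)%nat -> u m = 0 /\ v m = 0).
  { apply (cyclic_form_sh_normal_injective A u v Hdisc).
    intros i j k Hi Hj Hk.
    transitivity (cyclic_form (sh_normal A) (mvec Jm gp) (mvec Jm gq) z i j k
      - cyclic_form (sh_normal A) (mvec (trans (C2m (sh_normal A))) z)
          (mvec (trans (C1m (sh_normal A))) z) z i j k);
      [unfold cyclic_form, pencil, u, v; cbv beta; ring |].
    rewrite Hzero, (cyclic_form_compatible A) by (easy || now intros m _).
    ring. }
  assert (HJ : forall (C : Mat) g, skew_hamiltonian C ->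
             (forall m, (m < 6)%nat -> mvec Jm g m - mvec (trans C) z m = 0) ->
             forall m, (m < 6)%nat -> g m = mvec C gr m).
  { intros C g HC Hg m Hm.
    enough (g m - mvec C gr m = 0) by lra.
    apply (mvec_Jm_injective (fun l => g l - mvec C gr l)); [| exact Hm].
    intros l Hl. rewrite mvec_minus, skew_hamiltonian_mvec_Jm by assumption.
    now apply Hg. }
  intros m Hm. split.
  - apply HJ; [apply skew_hamiltonian_C1m, sh_normal_skew_hamiltonian | | exact Hm].
    intros l Hl. apply Huv, Hl.
  - apply HJ; [apply skew_hamiltonian_C2m, sh_normal_skew_hamiltonian | | exact Hm].
    intros l Hl. apply Huv, Hl.
Qed.

(** * The Jacobi identity for the pencil *)

Definition jacobiator (A : Mat) (f0 f1 f2 : R) (gp gq gr : nat -> R) (i j k : nat) : R :=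
  sum6 (fun l => pencil A f0 f1 f2 i l * pencil A (gp l) (gq l) (gr l) j k)
  + sum6 (fun l => pencil A f0 f1 f2 j l * pencil A (gp l) (gq l) (gr l) k i)
  + sum6 (fun l => pencil A f0 f1 f2 k l * pencil A (gp l) (gq l) (gr l) i j).

Lemma jacobiator_cyclic_form A f0 f1 f2 gp gq gr i j k :
  jacobiator A f0 f1 f2 gp gq gr i j k =
    f0 * cyclic_form A (mvec Jm gp) (mvec Jm gq) (mvec Jm gr) i j k
  + f1 * cyclic_form A (mvec (AtJ A) gp) (mvec (AtJ A) gq) (mvec (AtJ A) gr) i j k
  + f2 * cyclic_form A (mvec (At2J A) gp) (mvec (At2J A) gq) (mvec (At2J A) gr) i j k.
Proof. unfold jacobiator, cyclic_form, pencil, mvec. unfold_sums. ring. Qed.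

Lemma jacobiator_zero_of_grad_rel A gp gq gr f0 f1 f2 i j k :
  let N := sh_normal A in
  (forall m, (m < 6)%nat -> gp m = mvec (C2m N) gr m) ->
  (forall m, (m < 6)%nat -> gq m = mvec (C1m N) gr m) ->
  (i < 6)%nat -> (j < 6)%nat -> (k < 6)%nat ->
  jacobiator N f0 f1 f2 gp gq gr i j k = 0.
Proof.
  intros N Hp Hq Hi Hj Hk.
  assert (HJ : compatible_triple N (mvec Jm gp) (mvec Jm gq) (mvec Jm gr))
    by (apply compatible_triple_Jm; [apply sh_normal_skew_hamiltonian | ..]; assumption).
  assert (HAtJ : compatible_triple N
                   (mvec (AtJ N) gp) (mvec (AtJ N) gq) (mvec (AtJ N) gr)).
  { generalize (compatible_triple_trans N _ _ _ HJ).
    apply compatible_triple_ext; intros m _; symmetry; apply mvec_AtJ. }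
  assert (HAt2J : compatible_triple N
                    (mvec (At2J N) gp) (mvec (At2J N) gq) (mvec (At2J N) gr)).
  { generalize (compatible_triple_trans N _ _ _ (compatible_triple_trans N _ _ _ HJ)).
    apply compatible_triple_ext; intros m _; symmetry; apply mvec_At2J. }
  rewrite jacobiator_cyclic_form, !(cyclic_form_compatible A) by assumption.
  ring.
Qed.

Definition grad (f : R6fun) (x : nat -> R) (l : nat) : R := pd f l x.

Lemma pd_unique f i x l :
  derivable_pt_lim (fun t => ev6 f (upd x i t)) (x i) l -> pd f i x = l.
Proof.
  intro H. unfold pd.
  apply (uniqueness_limite (fun t => ev6 f (upd x i t)) (x i)); [| exact H].
  apply epsilon_spec. now exists l.
Qed.

Lemma smooth_derivable f i x : smooth f -> (i < 6)%nat ->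
  derivable_pt_lim (fun t => ev6 f (upd x i t)) (x i) (pd f i x).
Proof.
  intros Hf Hi. destruct (Hf 1%nat) as [_ [g [Hg _]]].
  rewrite (pd_unique f i x _ (Hg i x Hi)). exact (Hg i x Hi).
Qed.

Lemma derivable_pt_lim_affine3 (f g h : R -> R) x df dg dh k0 k1 k2 k3 :
  derivable_pt_lim f x df -> derivable_pt_lim g x dg -> derivable_pt_lim h x dh ->
  derivable_pt_lim (fun t => k0 + k1 * f t + k2 * g t + k3 * h t) x
    (k1 * df + k2 * dg + k3 * dh).
Proof.
  intros Hf Hg Hh.
  replace (k1 * df + k2 * dg + k3 * dh) with (0 + k1 * df + k2 * dg + k3 * dh) by ring.
  repeat apply derivable_pt_lim_plus;
    [apply derivable_pt_lim_const | apply derivable_pt_lim_scal; assumption ..].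
Qed.

Lemma ev6_PiT eps A p q r j k x :
  ev6 (PiT eps A p q r j k) x
  = pencil A (1 - eps^2 * ev6 p x) (- eps^2 * ev6 q x) (- eps^2 * ev6 r x) j k.
Proof. unfold ev6, PiT, pencil, AtJ, At2J. ring. Qed.

Lemma pd_PiT eps A p q r j k l x :
  smooth p -> smooth q -> smooth r -> (l < 6)%nat ->
  pd (PiT eps A p q r j k) l x
  = - eps^2 * pencil A (grad p x l) (grad q x l) (grad r x l) j k.
Proof.
  intros Hp Hq Hr Hl. apply pd_unique.
  replace (- eps^2 * pencil A (grad p x l) (grad q x l) (grad r x l) j k)
    with (- eps^2 * Jm j k * pd p l x + - eps^2 * AtJ A j k * pd q l x
          + - eps^2 * At2J A j k * pd r l x) by (unfold pencil, grad; ring).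
  apply derivable_pt_lim_ext with (f := fun t => Jm j k
    + - eps^2 * Jm j k * ev6 p (upd x l t) + - eps^2 * AtJ A j k * ev6 q (upd x l t)
    + - eps^2 * At2J A j k * ev6 r (upd x l t)).
  - intro t. rewrite ev6_PiT. unfold pencil. ring.
  - apply derivable_pt_lim_affine3; now apply smooth_derivable.
Qed.

Definition jacobi_sum (Pi : nat -> nat -> R6fun) (x : nat -> R) (i j k : nat) : R :=
  sum6 (fun l => ev6 (Pi i l) x * pd (Pi j k) l x)
  + sum6 (fun l => ev6 (Pi j l) x * pd (Pi k i) l x)
  + sum6 (fun l => ev6 (Pi k l) x * pd (Pi i j) l x).

Lemma jacobi_sum_PiT eps A p q r x i j k : smooth p -> smooth q -> smooth r ->
  jacobi_sum (PiT eps A p q r) x i j k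
  = - eps^2 * jacobiator A 1 0 0 (grad p x) (grad q x) (grad r x) i j k
    + eps^4 * jacobiator A (ev6 p x) (ev6 q x) (ev6 r x)
                (grad p x) (grad q x) (grad r x) i j k.
Proof.
  intros Hp Hq Hr.
  assert (E : forall a b c,
    sum6 (fun l => ev6 (PiT eps A p q r a l) x * pd (PiT eps A p q r b c) l x)
    = sum6 (fun l =>
        pencil A (1 - eps^2 * ev6 p x) (- eps^2 * ev6 q x) (- eps^2 * ev6 r x) a l
        * (- eps^2 * pencil A (grad p x l) (grad q x l) (grad r x l) b c))).
  { intros a b c. apply sum6_ext. intros l Hl. now rewrite ev6_PiT, pd_PiT. }
  unfold jacobi_sum. rewrite !E. unfold jacobiator, pencil. unfold_sums. ring.
Qed.

Lemma poisson_PiT_sh_normal A p q r :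
  let N := sh_normal A in
  generic_sh N -> smooth p -> smooth q -> smooth r ->
  ((forall eps : R, poisson_tensor (PiT eps N p q r)) <->
   (grad_rel q (C1m N) r /\ grad_rel p (C2m N) r)).
Proof.
  intros N Hgen Hp Hq Hr. subst N. split.
  - intros HP.
    (* the Jacobi sum is -eps^2 G0 + eps^4 G1; taking eps = 1, 2 isolates G0 *)
    assert (HG0 : forall x i j k, (i < 6)%nat -> (j < 6)%nat -> (k < 6)%nat ->
              jacobiator (sh_normal A) 1 0 0 (grad p x) (grad q x) (grad r x) i j k = 0).
    { intros x i j k Hi Hj Hk.
      pose proof (proj2 (HP 1) i j k x Hi Hj Hk) as H1.
      pose proof (proj2 (HP 2) i j k x Hi Hj Hk) as H2.
      change (jacobi_sum (PiT 1 (sh_normal A) p q r) x i j k = 0) in H1.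
      change (jacobi_sum (PiT 2 (sh_normal A) p q r) x i j k = 0) in H2.
      rewrite jacobi_sum_PiT in H1, H2 by assumption.
      lra. }
    assert (Hrel : forall x m, (m < 6)%nat ->
              grad q x m = mvec (C1m (sh_normal A)) (grad r x) m /\
              grad p x m = mvec (C2m (sh_normal A)) (grad r x) m).
    { intro x. apply grad_relations_of_cyclic_form; [now apply generic_sh_discriminant |].
      intros i j k Hi Hj Hk. pose proof (HG0 x i j k Hi Hj Hk) as E.
      rewrite jacobiator_cyclic_form in E. lra. }
    split; intros x i Hi; apply (Hrel x i Hi).
  - intros [Hq1 Hp2] eps. split.
    + intros i j x Hi Hj. rewrite !ev6_PiT.
      apply pencil_antisym; [apply sh_normal_skew_hamiltonian | assumption ..].
    + intros i j k x Hi Hj Hk.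
      change (jacobi_sum (PiT eps (sh_normal A) p q r) x i j k = 0).
      rewrite jacobi_sum_PiT, !(jacobiator_zero_of_grad_rel A) by
        (assumption || (intros m Hm; apply Hp2, Hm) || (intros m Hm; apply Hq1, Hm)).
      ring.
Qed.

(** * Reduction to the normal form *)

Lemma generic_sh_agree6 M M' : agree6 M M' -> generic_sh M -> generic_sh M'.
Proof.
  intros H (c2 & c1 & c0 & Hc & roots). exists c2, c1, c0. split; [| exact roots].
  intro lam. rewrite <- (charpoly6_agree6 M M' lam H). apply Hc.
Qed.

Lemma grad_rel_agree6 f M M' g : agree6 M M' -> grad_rel f M g <-> grad_rel f M' g.
Proof.
  intro H. unfold grad_rel. split; intros Hf x i Hi; rewrite Hf by exact Hi;
    apply sum6_ext; intros l Hl; now rewrite H.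
Qed.

Lemma PiT_agree6 eps A A' p q r j k : agree6 A A' -> (j < 6)%nat -> (k < 6)%nat ->
  PiT eps A p q r j k = PiT eps A' p q r j k.
Proof.
  intros H Hj Hk. unfold PiT.
  assert (Ht : agree6 (trans A) (trans A')) by now apply trans_agree6.
  rewrite (mmul_agree6 _ _ _ _ Ht (agree6_refl Jm) j k Hj Hk).
  rewrite (mmul_agree6 _ _ _ _ (mmul_agree6 _ _ _ _ Ht Ht) (agree6_refl Jm) j k Hj Hk).
  reflexivity.
Qed.

Lemma poisson_tensor_agree (Pi Pi' : nat -> nat -> R6fun) :
  (forall i j, (i < 6)%nat -> (j < 6)%nat -> Pi i j = Pi' i j) ->
  poisson_tensor Pi -> poisson_tensor Pi'.
Proof.
  intros H [Hanti Hjac]. split.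
  - intros i j x Hi Hj. rewrite <- !H by assumption. now apply Hanti.
  - intros i j k x Hi Hj Hk. rewrite <- (Hjac i j k x Hi Hj Hk).
    rewrite <- (H j k), <- (H k i), <- (H i j) by assumption.
    f_equal; [f_equal |]; apply sum6_ext; intros l Hl;
      now rewrite <- (H _ l) by assumption.
Qed.

Theorem mainTheorem13 (A : Mat) (p q r : R6fun) :
  skew_hamiltonian A -> generic_sh A ->
  smooth p -> smooth q -> smooth r ->
  ((forall eps : R, poisson_tensor (PiT eps A p q r)) <->
   (grad_rel q (C1m A) r /\ grad_rel p (C2m A) r)).
Proof.
  intros HA Hgen Hp Hq Hr.
  pose proof (skew_hamiltonian_sh_normal A HA) as HN.
  assert (HN' : agree6 (sh_normal A) A) by (intros i j Hi Hj; symmetry; now apply HN).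
  rewrite (grad_rel_agree6 q _ _ r (C1m_agree6 _ _ HN)),
    (grad_rel_agree6 p _ _ r (C2m_agree6 _ _ HN)).
  rewrite <- (poisson_PiT_sh_normal A p q r (generic_sh_agree6 _ _ HN Hgen) Hp Hq Hr).
  split; intros H eps; refine (poisson_tensor_agree _ _ _ (H eps));
    intros i j Hi Hj; now apply PiT_agree6.
Qed.
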